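(* Let $n,d$ be positive integers. If $G$ is a graph with $n$ vertices and $\frac{nd}{2}-1$ edges, then the number of closed walks of length four in $G$ is at least $n(2d^2-d)-8d+2$.
   Context: All graphs are finite, simple and undirected. A closed walk of length four is a sequence of vertices $v_0v_1v_2v_3v_4$ with $v_4=v_0$ and $v_{i}v_{i+1}$ an edge for each $0\le i\le 3$. *)

From mathcomp Require Import all_boot all_order all_algebra.
Set Implicit Arguments. Unset Strict Implicit. Unset Printing Implicit Defensive.

Definition simple_graph (T : finType) (e : rel T) : Prop :=
  symmetric e /\ irreflexive e.

Definition edge_set (T : finType) (e : rel T) : {set {set T}} :=
  [set E : {set T} | [exists x, exists y, e x y && (E == [set x; y])]].

Definition num_edges (T : finType) (e : rel T) : nat := #|edge_set e|.

(* Closed walks of length four v0 v1 v2 v3 v4 = v0, counted as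
   sequences (v0, v1, v2, v3). *)
Definition num_closed_walks4 (T : finType) (e : rel T) : nat :=
  #|[set w : T * T * T * T |
      [&& e w.1.1.1 w.1.1.2, e w.1.1.2 w.1.2, e w.1.2 w.2 & e w.2 w.1.1.1]]|.

(* Write D for the sum of the degrees, so D = 2|E| = nd - 2, and S for the sum of
   their squares.  Closed 4-walks with v2 = v0 are counted by S, and so are those
   with v3 = v1, while those with both are counted by D; inclusion-exclusion gives
   #walks >= 2S - D.  Summing (deg x - d)^2 >= 0 gives S >= 2dD - nd^2, whence
   #walks >= (4d - 1)(nd - 2) - 2nd^2. *)

From mathcomp Require Import all_boot all_order all_algebra.
From mathcomp Require Import zify.
Import GRing.Theory Num.Theory.

Set Implicit Arguments.
Unset Strict Implicit.
Unset Printing Implicit Defensive.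

Lemma card_set_sum (U : finType) (P : pred U) : #|[set x | P x]| = \sum_x (P x : nat).
Proof. by rewrite -sum1dep_card big_mkcond /=; apply: eq_bigr => x _; case: (P x). Qed.

Lemma sum_eq_mul (I : finType) (i : I) (F : I -> nat) : \sum_j ((j == i) * F j) = F i.
Proof. by rewrite (bigD1 i) //= eqxx mul1n big1 ?addn0 // => j /negPf ->. Qed.

Lemma sum_Cauchy (I : finType) (F : I -> nat) (d : nat) :
  2 * d * \sum_i F i <= \sum_i F i ^ 2 + #|I| * d ^ 2.
Proof.
rewrite big_distrr -sum_nat_const -big_split /=; apply: leq_sum => i _.
by rewrite mulnAC -mulnA nat_Cauchy.
Qed.

Lemma set2_eq (T : finType) (x y u v : T) : x != y ->
  ([set u; v] == [set x; y]) = ((u, v) == (x, y)) || ((u, v) == (y, x)).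
Proof.
move=> xy; apply/idP/idP => [/eqP/setP E | /orP[] /eqP[-> ->] //]; last by rewrite setUC.
rewrite !xpair_eqE; have := E u; rewrite !inE eqxx /= => /esym/orP[] /eqP uxy; subst u.
  have := E y; rewrite !inE eqxx orbT [y == x]eq_sym (negPf xy) => /eqP <-.
  by rewrite !eqxx.
have := E x; rewrite !inE eqxx /= (negPf xy) => /eqP <-.
by rewrite !eqxx orbT.
Qed.

Section ClosedWalks.
Variables (T : finType) (e : rel T).

Definition degree (x : T) : nat := \sum_y (e x y : nat).

Definition closed_walk4 (a b c f : T) : bool := [&& e a b, e b c, e c f & e f a].

Lemma num_closed_walks4E :
  num_closed_walks4 e = \sum_a \sum_b \sum_c \sum_f (closed_walk4 a b c f : nat).
Proof.
rewrite /num_closed_walks4 card_set_sum.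
rewrite -(pair_bigA _ (fun p f => (closed_walk4 p.1.1 p.1.2 p.2 f : nat))) /=.
rewrite -(pair_bigA _ (fun p c => \sum_f (closed_walk4 p.1 p.2 c f : nat))) /=.
by rewrite -(pair_bigA _ (fun a b => \sum_c \sum_f (closed_walk4 a b c f : nat))).
Qed.

Hypothesis e_sym : symmetric e.

Lemma sum_degree_sqr_v0v2 :
  \sum_x degree x ^ 2 = \sum_a \sum_b \sum_c \sum_f ((c == a) * closed_walk4 a b c f).
Proof.
apply: eq_bigr => a _; rewrite -mulnn big_distrlr /=; apply: eq_bigr => b _.
under [RHS]eq_bigr => c _ do rewrite -big_distrr /=.
rewrite sum_eq_mul; apply: eq_bigr => f _.
by rewrite /closed_walk4 (e_sym b a) (e_sym f a); case: (e a b); case: (e a f).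
Qed.

Lemma sum_degree_sqr_v1v3 :
  \sum_x degree x ^ 2 = \sum_a \sum_b \sum_c \sum_f ((f == b) * closed_walk4 a b c f).
Proof.
under [RHS]eq_bigr => a _ do under eq_bigr => b _ do under eq_bigr => c _ do rewrite sum_eq_mul.
rewrite exchange_big; apply: eq_bigr => b _; rewrite -mulnn big_distrlr /=.
apply: eq_bigr => a _; apply: eq_bigr => c _.
by rewrite /closed_walk4 (e_sym a b) (e_sym c b); case: (e b a); case: (e b c).
Qed.

Lemma sum_degree_v0v2_v1v3 :
  \sum_x degree x =
  \sum_a \sum_b \sum_c \sum_f ((c == a) * ((f == b) * closed_walk4 a b c f)).
Proof.
apply: eq_bigr => a _; apply: eq_bigr => b _.
under [RHS]eq_bigr => c _ do rewrite -big_distrr /= sum_eq_mul.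
by rewrite sum_eq_mul /closed_walk4 (e_sym b a) !andbb.
Qed.

Lemma closed_walks4_ge : 2 * \sum_x degree x ^ 2 <= num_closed_walks4 e + \sum_x degree x.
Proof.
rewrite mul2n -addnn {1}sum_degree_sqr_v0v2 sum_degree_sqr_v1v3 sum_degree_v0v2_v1v3.
rewrite num_closed_walks4E -!big_split; apply: leq_sum => a _.
rewrite -!big_split; apply: leq_sum => b _; rewrite -!big_split; apply: leq_sum => c _.
rewrite -!big_split; apply: leq_sum => f _ /=.
by case: (c == a); case: (f == b); case: (closed_walk4 a b c f).
Qed.

Hypothesis e_irr : irreflexive e.

Lemma edge_setE : edge_set e = (fun p : T * T => [set p.1; p.2]) @: [set p | e p.1 p.2].
Proof.
apply/setP => E; rewrite inE; apply/existsP/imsetP => [[x /existsP[y /andP[exy /eqP ->]]] | [[x y]]].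
  by exists (x, y); rewrite ?inE.
by rewrite inE /= => exy ->; exists x; apply/existsP; exists y; rewrite exy eqxx.
Qed.

Lemma sum_degree_edges : \sum_x degree x = 2 * num_edges e.
Proof.
have -> : \sum_x degree x = #|[set p : T * T | e p.1 p.2]|.
  by rewrite card_set_sum -(pair_bigA _ (fun x y => (e x y : nat))).
rewrite -sum1_card (partition_big_imset (fun p : T * T => [set p.1; p.2])) /=.
rewrite -edge_setE /num_edges mulnC -sum_nat_const; apply: eq_bigr => E.
rewrite inE => /existsP[x /existsP[y /andP[exy /eqP ->]]].
have xy : x != y by apply: contraTneq exy => ->; rewrite e_irr.
rewrite sum1dep_card (_ : [set _ | _] = [set (x, y); (y, x)]).
  by rewrite cards2 xpair_eqE (negPf xy).
apply/setP => -[u v]; rewrite !inE /= set2_eq //.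
case: eqP => [[-> ->] | _]; first by rewrite exy.
by case: eqP => [[-> ->] | _]; rewrite ?andbF // e_sym exy.
Qed.

End ClosedWalks.

Local Open Scope ring_scope.

Theorem corollary3p2 (n d : nat) (T : finType) (e : rel T) :
  (0 < n)%N -> (0 < d)%N -> simple_graph e -> #|T| = n ->
  (2 * num_edges e + 2 = n * d)%N ->
  (n%:Z * (2 * d%:Z ^+ 2 - d%:Z) - 8 * d%:Z + 2 <= (num_closed_walks4 e)%:Z).
Proof.
move=> _ _ [e_sym e_irr] card_T num_edges_e.
have walks := closed_walks4_ge e_sym.
have handshake := sum_degree_edges e_sym e_irr.
have := sum_Cauchy (degree e) d; rewrite card_T => cauchy.
rewrite expr2; nia.
Qed.
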